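(* Let $q\ge2$, $m\ge0$. If $m\ge1$, fix a partition of $\mathbb{Z}_q^m$ into $q$ distance-$2$ MDS codes $M^1,\dots,M^q$ of $H(m,q)$. For $0\le t\le q$ and $1\le i\le q$, let $G^i_t$ be the map $\mathbb{Z}_q^m\to\{1,2\}$ equal to $1$ exactly on $\bigcup_{j=i}^{i+t-1}M^j$ (indices taken cyclically in $\{1,\dots,q\}$) if $m\ge1$; if $m=0$ ($H(0,q)$ is a single vertex), $G^i_t$ gives that vertex color $1$ if $1\le i\le t$ and color $2$ if $t<i\le q$. Let $\mathbf{l}$ denote the constant map $\mathbb{Z}_q^m\to\{l\}$. (1) Let $f$ be a perfect $(q+1)$-coloring of $H(n,q)$ with quotient matrix whose entries are: $s_{i,i}=\alpha'$ and $s_{i,j}=\alpha$ for $1\le i\ne j\le q$; $s_{i,q+1}=\beta$ for $i\le q$; $s_{q+1,j}=\gamma$ for $j\le q$; $s_{q+1,q+1}=\delta$. If $m=\gamma-\alpha\ge0$, then for every $t\in\{0,\dots,q\}$ and $l\in\{1,2\}$ with $t(l-1)+(q-t)(2-l)\ne0$, the invasion $h_l=f\times(G^1_t,\dots,G^q_t,\mathbf{l})$ is a $(b_l,c_l)$-coloring of $H(n+m,q)$ with $b_l=\gamma(q-t)+\beta(l-1)$ and $c_l=\gamma t+\beta(2-l)$. (2) Let $f$ be a perfect $2q$-coloring of $H(n,q)$ with quotient matrix $(s_{i,j})$ where $s_{i,j}=\alpha$ for $i,j\le q$; $s_{i,j}=\beta$ for $i\le q<j$; $s_{i,j}=\gamma$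 for $j\le q<i$; $s_{i,j}=\delta$ for $i,j>q$. If $m=\gamma-\alpha=\beta-\delta\ge0$, then for all $t_1,t_2\in\{0,\dots,q\}$ with $t_1+t_2\notin\{0,2q\}$ the invasion $h=f\times(G^1_{t_1},\dots,G^q_{t_1},G^1_{t_2},\dots,G^q_{t_2})$ is a $(b,c)$-coloring of $H(n+m,q)$ with $b=q(\gamma+\beta)-\gamma t_1-\beta t_2$ and $c=\gamma t_1+\beta t_2$.
   Context: The Hamming graph $H(n,q)$ has vertex set $\mathbb{Z}_q^n$, two vertices adjacent iff they differ in exactly one coordinate. A perfect $k$-coloring is a surjective map from the vertex set onto $\{1,\dots,k\}$ such that every vertex of color $i$ has exactly $s_{i,j}$ neighbours of color $j$; $(s_{i,j})$ is its quotient matrix. A $(b,c)$-coloring of $H(N,q)$ is a perfect $2$-coloring in which each color-1 vertex has exactly $b$ neighbours of color 2 and each color-2 vertex has exactly $c$ neighbours of color 1. A distance-$2$ MDS code in $H(m,q)$ is a set of $q^{m-1}$ vertices with pairwise Hamming distance at least $2$. Given a $k$-coloring $f$ of $H(n,q)$ and maps $g_1,\dots,g_k:\mathbb{Z}_q^m\to\{1,2\}$, the invasion $f\times(g_1,\dots,g_k)$ is the map on $\mathbb{Z}_q^{n+m}$ given by $(x,y)\mapsto g_{f(x)}(y)$ for $x\in\mathbb{Z}_q^n$, $y\in\mathbb{Z}_q^m$. *)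

From mathcomp Require Import all_boot.
Set Implicit Arguments. Unset Strict Implicit. Unset Printing Implicit Defensive.

Definition hv (n q : nat) := {ffun 'I_n -> 'I_q}.

Definition hamming (n q : nat) (x y : hv n q) : nat := #|[set i | x i != y i]|.

Definition adj (n q : nat) (x y : hv n q) : bool := hamming x y == 1.

Definition perfect_coloring (n q : nat) (f : hv n q -> nat) (k : nat)
  (S : nat -> nat -> nat) : Prop :=
  [/\ (forall x, 1 <= f x <= k),
      (forall j, 1 <= j <= k -> exists x, f x = j) &
      (forall x j, 1 <= j <= k ->
         #|[set y | adj x y & f y == j]| = S (f x) j)].

Definition bc_coloring (n q : nat) (h : hv n q -> nat) (b c : nat) : Prop :=
  exists S, [/\ perfect_coloring h 2 S, S 1 2 = b & S 2 1 = c].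

Definition mds2 (m q : nat) (C : {set hv m q}) : Prop :=
  #|C| = q ^ (m - 1) /\
  (forall x y, x \in C -> y \in C -> x != y -> 2 <= hamming x y).

Definition mds_partition (m q : nat) (M : nat -> {set hv m q}) : Prop :=
  [/\ (forall j, 1 <= j <= q -> mds2 (M j)),
      (forall i j, 1 <= i <= q -> 1 <= j <= q -> i != j ->
         [disjoint M i & M j]) &
      (forall y, exists2 j, 1 <= j <= q & y \in M j)].

Definition Gmap (m q : nat) (M : nat -> {set hv m q}) (t i : nat)
  (y : hv m q) : nat :=
  if m == 0 then (if (1 <= i) && (i <= t) then 1 else 2)
  else if [exists k : 'I_t, y \in M (((i - 1 + k) %% q).+1)] then 1 else 2.

Definition lpart (n m q : nat) (z : hv (n + m) q) : hv n q :=
  [ffun i : 'I_n => z (lshift m i)].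
Definition rpart (n m q : nat) (z : hv (n + m) q) : hv m q :=
  [ffun j : 'I_m => z (rshift n j)].

Definition invasion (n m q : nat) (f : hv n q -> nat)
  (g : nat -> hv m q -> nat) (z : hv (n + m) q) : nat :=
  g (f (lpart z)) (rpart z).

From mathcomp Require Import all_boot zify.
Set Implicit Arguments. Unset Strict Implicit. Unset Printing Implicit Defensive.

(* A vertex (x, y) of H(n + m, q) has two kinds of neighbours: the (x', y), whose colors
   are read off the quotient matrix of f, and the (x, y'), colored by the one map attached
   to the cell of x.  In a partition of H(m, q) into distance-2 MDS codes, y has no
   neighbour in its own code and exactly m in every other one; as G^i_t is 1 on a cyclic
   window of t codes, exactly t of G^1_t, ..., G^q_t are 1 at y.  So a vertex whose color
   differs from c has, per cell whose map is c at y, alpha (or delta) neighbours of the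
   first kind plus m of the second kind, or gamma (or beta) of the first kind only; the
   relations m = gamma - alpha (and m = beta - delta) make the counts agree. *)

Section HammingGraph.
Variables (N q : nat).
Implicit Types x y : hv N q.

Lemma hamming_eq0 x y : (hamming x y == 0) = (x == y).
Proof.
rewrite /hamming cards_eq0; apply/eqP/eqP => [xy|->]; last first.
  by apply/setP => i; rewrite !inE eqxx.
by apply/ffunP => i; apply/eqP/negbNE; rewrite -(in_set (fun i => x i != y i)) xy inE.
Qed.

Lemma hammingxx x : hamming x x = 0.
Proof. by apply/eqP; rewrite hamming_eq0. Qed.

Lemma adjxx x : adj x x = false.
Proof. by rewrite /adj hammingxx. Qed.

Lemma hamming_le1 x y k : (forall k', k' != k -> x k' = y k') -> hamming x y <= 1.
Proof.
move=> xy; rewrite -(cards1 k); apply/subset_leq_card/subsetP => k'.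
by rewrite !inE; apply: contraR => /xy ->.
Qed.

Lemma adjP x y :
  reflect (exists k, x k != y k /\ forall k', k' != k -> x k' = y k') (adj x y).
Proof.
apply: (iffP cards1P) => [[k xyk]|[k [neq eq_off]]].
  have diff k' : (k' == k) = (x k' != y k') by rewrite -in_set1 -xyk inE.
  exists k; split; first by rewrite -diff.
  by move=> k' /negPf; rewrite diff => /negbFE/eqP.
exists k; apply/setP => k'; rewrite !inE.
by case: (eqVneq k' k) => [->|/eq_off ->]; rewrite ?neq ?eqxx.
Qed.

Definition upd x (k : 'I_N) (a : 'I_q) : hv N q :=
  [ffun k' => if k' == k then a else x k'].

Lemma card_adj x : #|[set y | adj x y]| = N * (q - 1).
Proof.
pose D := [set p : 'I_N * 'I_q | p.2 != x p.1].
have -> : [set y | adj x y] = [set upd x p.1 p.2 | p in D].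
  apply/setP => y; rewrite inE; apply/adjP/imsetP => [[k [neq eq_off]]|[[k a] Dka ->]].
    exists (k, y k); first by rewrite inE eq_sym.
    by apply/ffunP => k'; rewrite ffunE; case: eqVneq => [->|/eq_off].
  exists k; rewrite !ffunE eqxx eq_sym; split; first by rewrite inE in Dka.
  by move=> k' /negPf; rewrite ffunE => ->.
rewrite card_in_imset => [|[k a] [k' a'] Dka _ /ffunP eq_upd]; last first.
  have := eq_upd k; rewrite /= !ffunE eqxx; case: (eqVneq k k') => [<- -> //|_ xka].
  by rewrite inE /= xka eqxx in Dka.
rewrite -sum1_card (eq_bigl (fun p => predT p.1 && (p.2 != x p.1))) => [|p]; last first.
  by rewrite inE.
rewrite -(pair_big_dep predT (fun i a => a != x i) (fun _ _ => 1)) /=.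
rewrite (eq_bigr (fun _ => q - 1)) ?sum_nat_const ?card_ord // => i _.
rewrite sum1_card -[in RHS](card_ord q) subn1 -(cardC1 (x i)).
by apply: eq_card => a; rewrite !inE.
Qed.

End HammingGraph.

Section Product.
Variables (n m q : nat).
Implicit Types (x : hv n q) (y : hv m q) (w : hv (n + m) q).

Definition join x y : hv (n + m) q :=
  [ffun k => match split k with inl i => x i | inr j => y j end].

Lemma lpart_join x y : lpart (join x y) = x.
Proof. by apply/ffunP => i; rewrite !ffunE (unsplitK (inl i)). Qed.

Lemma rpart_join x y : rpart (join x y) = y.
Proof. by apply/ffunP => j; rewrite !ffunE (unsplitK (inr j)). Qed.

Lemma join_part w : join (lpart w) (rpart w) = w.
Proof.
apply/ffunP => k; rewrite !ffunE.
by case: splitP => j kj; rewrite ffunE; congr (w _); apply: val_inj.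
Qed.

Lemma join_eqE x y x' y' : (join x y == join x' y') = (x == x') && (y == y').
Proof.
apply/idP/andP => [/eqP eq_xy|[/eqP-> /eqP->]] //.
have := congr1 (@lpart n m q) eq_xy; have := congr1 (@rpart n m q) eq_xy.
by rewrite !lpart_join !rpart_join => -> ->; rewrite !eqxx.
Qed.

Lemma hamming_join x y x' y' :
  hamming (join x y) (join x' y') = hamming x x' + hamming y y'.
Proof.
rewrite /hamming -!sum1_card (big_split_ord _ (fun k => k \in [set k | _ != _])) /=.
congr (_ + _); apply: eq_bigl => k.
  by rewrite !inE !ffunE (unsplitK (inl _)).
by rewrite !inE !ffunE (unsplitK (inr _)).
Qed.

Lemma adj_join x y x' y' :
  adj (join x y) (join x' y') = (adj x x' && (y == y')) || ((x == x') && adj y y').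
Proof.
rewrite /adj hamming_join -!hamming_eq0.
by case: (hamming x x') => [|[|a]]; case: (hamming y y') => [|[|b]].
Qed.

Lemma card_adj_join x y (P : pred (hv (n + m) q)) :
  #|[set w | adj (join x y) w & P w]| =
  #|[set x' | adj x x' & P (join x' y)]| + #|[set y' | adj y y' & P (join x y')]|.
Proof.
set L := [set x' | adj x x' & P (join x' y)]; set R := [set y' | adj y y' & P (join x y')].
have memL x' y' : (join x' y' \in join^~ y @: L) = (y' == y) && (x' \in L).
  apply/imsetP/andP => [[x'' Lx'' /eqP]|[/eqP-> Lx']]; last by exists x'.
  by rewrite join_eqE => /andP[/eqP-> /eqP->].
have memR x' y' : (join x' y' \in join x @: R) = (x' == x) && (y' \in R).
  apply/imsetP/andP => [[y'' Ry'' /eqP]|[/eqP-> Ry']]; last by exists y'.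
  by rewrite join_eqE => /andP[/eqP-> /eqP->].
have -> : [set w | adj (join x y) w & P w] = (join^~ y @: L) :|: (join x @: R).
  apply/setP => w; rewrite -(join_part w); move: (lpart w) (rpart w) => x' y'.
  rewrite !inE memL memR !inE adj_join ![_ == x]eq_sym ![_ == y]eq_sym.
  case: (eqVneq x x') => [<-|_]; case: (eqVneq y y') => [<-|_];
    by rewrite ?adjxx /= ?andbT ?orbF ?andbF.
have injl : injective (join^~ y) by move=> ? ? /eqP; rewrite join_eqE eqxx andbT => /eqP.
have injr : injective (join x) by move=> ? ? /eqP; rewrite join_eqE eqxx => /eqP.
rewrite (cardsU (join^~ y @: L)) (card_imset _ injl) (card_imset _ injr).
rewrite (_ : _ :&: _ = set0) ?cards0 ?subn0 //; apply/setP => w; rewrite !inE.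
rewrite -(join_part w) memL memR !inE.
by case: (eqVneq (lpart w) x) => [->|]; rewrite ?adjxx ?andbF.
Qed.

End Product.

Lemma card_coord_eq m q (k : 'I_m) (a : 'I_q) :
  #|[set w : hv m q | w k == a]| = q ^ (m - 1).
Proof.
rewrite (eq_card (B := pfamily a [pred k' | k' != k] (fun _ => predT))) => [|w]; last first.
  rewrite inE; apply/eqP/pfamilyP => [wk|[supp _]].
    by split=> //; apply/subsetP => k'; rewrite !inE; apply: contra => /eqP->; rewrite wk.
  by apply/eqP; apply: contraT => wk; have := subsetP supp k; rewrite !inE wk eqxx => /(_ isT).
rewrite card_pfamily /image_mem (eq_map (g := fun=> q)) => [|?]; last exact: card_ord.
have -> : m - 1 = size (enum [pred k' | k' != k]) by rewrite -cardE cardC1 card_ord subn1.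
by elim: (enum _) => //= k' s ->; rewrite expnS.
Qed.

Section MDSCode.
Variables (m q : nat) (C : {set hv m q}).
Hypothesis mdsC : mds2 C.

Lemma mds2_eq (c c' : hv m q) k :
  c \in C -> c' \in C -> (forall k', k' != k -> c k' = c' k') -> c = c'.
Proof.
move=> Cc Cc' agree; apply/eqP; apply: contraT => /(mdsC.2 _ _ Cc Cc').
by rewrite ltnNge (hamming_le1 agree).
Qed.

(* Overwriting coordinate [k] is injective on [C] and [C] fills the target fiber. *)
Lemma mds2_line (y : hv m q) k :
  exists c, c \in C /\ forall k', k' != k -> c k' = y k'.
Proof.
pose pi w := upd w k (y k).
have inj_pi : {in C &, injective pi}.
  move=> c c' Cc Cc' /ffunP eq_pi; apply: (mds2_eq (k := k) Cc Cc') => k' /negPf kk'.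
  by have := eq_pi k'; rewrite !ffunE kk'.
have : y \in pi @: C.
  suff -> : pi @: C = [set w : hv m q | w k == y k] by rewrite inE.
  apply/eqP; rewrite eqEcard card_in_imset // mdsC.1 card_coord_eq leqnn andbT.
  by apply/subsetP => _ /imsetP[c _ ->]; rewrite inE ffunE eqxx.
case/imsetP => c Cc ->; exists c; split=> // k' /negPf kk'.
by rewrite ffunE kk'.
Qed.

Lemma card_adj_mds2_in y : y \in C -> #|[set y' in C | adj y y']| = 0.
Proof.
move=> Cy; apply/eqP; rewrite cards_eq0; apply/eqP/setP => y'; rewrite !inE.
apply/andP => -[Cy' /[dup] adj_yy' /eqP hyy'].
have ne : y != y' by apply: contraTneq adj_yy' => ->; rewrite adjxx.
by have := mdsC.2 _ _ Cy Cy' ne; rewrite hyy'.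
Qed.

Lemma card_adj_mds2_notin y : y \notin C -> #|[set y' in C | adj y y']| = m.
Proof.
move=> notCy; have [phi phiP] := fin_all_exists (mds2_line y).
have phi_neq k : phi k k != y k.
  apply: contra notCy => /eqP eqk; have [Cphi agree] := phiP k.
  suff <- : phi k = y by [].
  by apply/ffunP => k'; case: (eqVneq k' k) => [->|/agree].
have -> : [set y' in C | adj y y'] = [set phi k | k : 'I_m].
  apply/setP => y'; rewrite !inE; apply/andP/imsetP => [[Cy' /adjP[k [yk agree]]]|[k _ ->]].
    exists k => //; have [Cphi agree'] := phiP k.
    by apply: (mds2_eq (k := k) Cy' Cphi) => k' kk'; rewrite -agree // agree'.
  have [Cphi agree] := phiP k; split=> //; apply/adjP; exists k.
  by split=> [|k' /agree ->]; rewrite // eq_sym phi_neq.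
rewrite card_imset ?card_ord // => k k' eq_phi; apply/eqP; apply: contraT => kk'.
by have := phi_neq k; rewrite eq_phi (proj2 (phiP k')) ?eqxx // eq_sym.
Qed.

End MDSCode.

Section MDSPartition.
Variables (m q : nat) (M : nat -> {set hv m q}).
Hypothesis hM : mds_partition M.

Definition code_index (y : hv m q) : nat :=
  odflt 0 (omap (fun j : 'I_q => j.+1) [pick j : 'I_q | y \in M j.+1]).

Lemma code_indexP y : 1 <= code_index y <= q /\ y \in M (code_index y).
Proof.
rewrite /code_index; case: pickP => [j Mj | noj] /=; first by rewrite ltn_ord.
case: hM => _ _ /(_ y) [[//|j] /andP[_ jq] Mj].
by have := noj (Ordinal jq); rewrite Mj.
Qed.

Lemma code_index_eq y j : 1 <= j <= q -> (code_index y == j) = (y \in M j).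
Proof.
move=> jq; have [iq My] := code_indexP y.
apply/eqP/idP => [<- //|Mj]; apply/eqP; apply: contraT => ne.
by case: hM => _ /(_ _ _ iq jq ne) /disjointFr /(_ My); rewrite Mj.
Qed.

Lemma card_adj_code_index y j : 1 <= j <= q ->
  #|[set y' | adj y y' & code_index y' == j]| = if j == code_index y then 0 else m.
Proof.
move=> jq; have [mdsM _ _] := hM; have mdsj := mdsM j jq.
rewrite (eq_card (B := [set y' in M j | adj y y'])) => [|y']; last first.
  by rewrite !inE code_index_eq // andbC.
case: eqP => [jE|/eqP ne]; first by rewrite card_adj_mds2_in // jE; case: (code_indexP y).
by rewrite card_adj_mds2_notin // -code_index_eq // eq_sym.
Qed.

End MDSPartition.

Definition in_window (q t i j : nat) : bool := [exists k : 'I_t, (i + k) %% q == j].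

(* The number of i in 1..q with [Gmap M t i y = c], for any y and c in {1, 2}. *)
Definition Gcount (q t c : nat) : nat := if c == 1 then t else q - t.

Section Windows.
Variables (q t : nat).
Hypotheses (q_gt0 : 0 < q) (tq : t <= q).

Lemma addn_modn_inj i (k k' : 'I_t) : (i + k) %% q = (i + k') %% q -> k = k'.
Proof.
move/eqP; rewrite eqn_modDl !modn_small => [/eqP/val_inj //||];
  exact: leq_trans (ltn_ord _) tq.
Qed.

Lemma modn_addl_eq i j (k : 'I_t) : i < q -> j < q ->
  ((k + i) %% q == j) = (i == (j + (q - k)) %% q).
Proof.
move=> iq jq; have kq : k <= q by apply: ltnW; apply: leq_trans (ltn_ord k) tq.
by rewrite -{1}(modn_small jq) -(eqn_modDr (q - k)) addnAC subnKC // modnDl modn_small.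
Qed.

Lemma card_window i : #|[set j : 'I_q | in_window q t i j]| = t.
Proof.
pose g (k : 'I_t) : 'I_q := Ordinal (ltn_pmod (i + k) q_gt0).
have inj_g : injective g by move=> k k' /(congr1 val) /addn_modn_inj.
rewrite -[RHS](card_ord t) -cardsT -(card_imset _ inj_g); apply: eq_card => j.
by rewrite !inE; apply/existsP/imsetP => [[k /eqP kj]|[k _ ->]];
  [exists k => //; apply: val_inj | exists k].
Qed.

Lemma card_windows_containing j : j < q -> #|[set i : 'I_q | in_window q t i j]| = t.
Proof.
move=> jq.
pose g (k : 'I_t) : 'I_q := Ordinal (ltn_pmod (j + (q - k)) q_gt0).
have gP k (i : 'I_q) : (i == g k) = ((k + i) %% q == j) by rewrite modn_addl_eq.
have gK (k : 'I_t) : (k + g k) %% q = j by apply/eqP; rewrite -gP.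
have inj_g : injective g.
  by move=> k k' eq_g; apply: (@addn_modn_inj (g k)); rewrite ![g k + _]addnC gK eq_g gK.
rewrite -[RHS](card_ord t) -cardsT -(card_imset _ inj_g); apply: eq_card => i.
rewrite !inE; apply/existsP/imsetP => [[k]|[k _ ->]]; last by exists k; rewrite addnC gK.
by rewrite addnC -gP => /eqP->; exists k.
Qed.

End Windows.

Lemma in_window0 q t j : t <= q -> j < q -> in_window q t 0 j = (j < t).
Proof.
move=> tq jq; apply/existsP/idP => [[k /eqP <-]|jt]; last first.
  by exists (Ordinal jt); rewrite add0n modn_small.
by rewrite add0n modn_small ?ltn_ord //; apply: leq_trans (ltn_ord k) tq.
Qed.

Lemma sum_nat_card q (P : pred nat) :
  \sum_(1 <= j < q.+1) (P j : nat) = #|[set j : 'I_q | P j.+1]|.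
Proof.
rewrite big_add1 /= big_mkord -sum1_card [RHS]big_mkcond /=.
by apply: eq_bigr => j _; rewrite inE; case: (P j.+1).
Qed.

Lemma sum_nat_cond_const n (P : pred nat) (F : nat -> nat) a :
  (forall j, 1 <= j <= n -> P j -> F j = a) ->
  \sum_(1 <= j < n.+1 | P j) F j = a * \sum_(1 <= j < n.+1) (P j : nat).
Proof.
move=> Fa; rewrite big_distrr big_mkcond /=; apply: eq_big_nat => j jn.
by case: ifP => [/(Fa j jn)->|]; rewrite ?muln1 ?muln0.
Qed.

Lemma sum_nat_cond_split a b (P : pred nat) (F : nat -> nat) :
  \sum_(1 <= j < (a + b).+1 | P j) F j =
  \sum_(1 <= j < a.+1 | P j) F j + \sum_(1 <= j < b.+1 | P (a + j)) F (a + j).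
Proof.
rewrite (big_cat_nat _ (n := a.+1)) // -?addSn ?leq_addr //; congr (_ + _).
rewrite -(add1n a) big_addn addSn subSn ?leq_addr // addKn.
by apply: congr_big_nat => // j; rewrite addnC.
Qed.

Lemma sum_color2 q t (g : nat -> nat) c :
  (forall j, (g j == 1) || (g j == 2)) ->
  \sum_(1 <= j < q.+1) (g j == 1 : nat) = t -> (c == 1) || (c == 2) ->
  \sum_(1 <= j < q.+1) (g j == c : nat) = Gcount q t c.
Proof.
move=> g12 sum1 /orP[] /eqP-> //; rewrite /Gcount /= -sum1.
have : \sum_(1 <= j < q.+1) ((g j == 1 : nat) + (g j == 2 : nat)) = q.
  rewrite (eq_bigr (fun=> 1)) ?sum_nat_const_nat ?muln1 ?subn1 // => j _.
  by case/orP: (g12 j) => /eqP->.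
by rewrite big_split /=; lia.
Qed.

Lemma card_by_color (T : finType) (D : pred T) (f : T -> nat) (P : pred nat) k :
  (forall x, 1 <= f x <= k) ->
  #|[set x | D x & P (f x)]| = \sum_(1 <= j < k.+1 | P j) #|[set x | D x & f x == j]|.
Proof.
move=> f_range; rewrite -sum1_card big_mkcond [RHS]big_mkcond /=.
rewrite (eq_bigr (fun j => \sum_x (P j && D x && (f x == j) : nat))) => [|j _]; last first.
  rewrite -sum1_card big_mkcond; case: (P j) => /=; last by rewrite big1.
  by apply: eq_bigr => x _; rewrite inE; case: (_ && _).
rewrite exchange_big /=; apply: eq_bigr => x _; rewrite !inE.
have fx_in : f x \in index_iota 1 k.+1 by rewrite mem_index_iota.
rewrite (bigD1_seq (f x)) ?iota_uniq //= big1 => [|j /negPf fxj]; last first.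
  by rewrite eq_sym fxj andbF.
by rewrite eqxx andbT addn0 andbC; case: (_ && _).
Qed.

Lemma card_adj_perfect n q (f : hv n q -> nat) k S x (P : pred nat) :
  perfect_coloring f k S ->
  #|[set x' | adj x x' & P (f x')]| = \sum_(1 <= j < k.+1 | P j) S (f x) j.
Proof.
case=> f_range _ f_perf; rewrite (card_by_color (adj x) P f_range).
by apply: congr_big_nat => // j /and3P[_ j_gt0 jk]; rewrite f_perf ?j_gt0.
Qed.

Section Invasion.
Variables (n m q k : nat) (f : hv n q -> nat) (g : nat -> hv m q -> nat).

Lemma invasion_join x y : invasion f g (join x y) = g (f x) y.
Proof. by rewrite /invasion lpart_join rpart_join. Qed.

Lemma card_adj_invasion S x y c : perfect_coloring f k S ->
  #|[set w | adj (join x y) w & invasion f g w == c]| =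
  \sum_(1 <= j < k.+1 | g j y == c) S (f x) j + #|[set y' | adj y y' & g (f x) y' == c]|.
Proof.
move=> f_perf; rewrite card_adj_join; congr (_ + _).
  rewrite -(card_adj_perfect x (fun j => g j y == c) f_perf).
  by apply: eq_card => x'; rewrite !inE invasion_join.
by apply: eq_card => y'; rewrite !inE invasion_join.
Qed.

Lemma invasion_colors S j y c : perfect_coloring f k S -> 1 <= j <= k -> g j y = c ->
  exists w, invasion f g w = c.
Proof.
by case=> _ f_onto _ /f_onto[x fx] gjy; exists (join x y); rewrite invasion_join fx.
Qed.

End Invasion.

Lemma adj_dim_gt0 N q (x y : hv N q) : adj x y -> 0 < N.
Proof. by move/adjP => [k _]; apply: leq_ltn_trans (ltn_ord k). Qed.

Section GmapCount.
Variables (m q : nat) (M : nat -> {set hv m q}).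
Hypotheses (q_gt0 : 0 < q) (hM : 0 < m -> mds_partition M).

Lemma Gmap_color t i y : (Gmap M t i y == 1) || (Gmap M t i y == 2).
Proof. by rewrite /Gmap; repeat case: ifP. Qed.

Lemma Gmap_window t i y : 0 < m ->
  Gmap M t i y = if in_window q t i.-1 (code_index M y).-1 then 1 else 2.
Proof.
move=> m_gt0; have [iq _] := code_indexP (hM m_gt0) y.
rewrite /Gmap -[m == 0]negbK -lt0n m_gt0 subn1 /=.
congr (if _ then 1 else 2); apply: eq_existsb => k.
rewrite -(code_index_eq (hM m_gt0)) ?ltn_pmod //.
by case: (code_index M y) iq => // c _; rewrite eqSS eq_sym.
Qed.

Lemma sum_Gmap1 t y : t <= q -> \sum_(1 <= i < q.+1) (Gmap M t i y == 1 : nat) = t.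
Proof.
move=> tq; rewrite sum_nat_card; case: (posnP m) => [m0|m_gt0].
  rewrite -[RHS](card_window q_gt0 tq 0); apply: eq_card => i.
  by rewrite !inE in_window0 // /Gmap (introT eqP m0) /=; case: ltnP.
have [iq _] := code_indexP (hM m_gt0) y.
rewrite -[RHS](card_windows_containing q_gt0 tq (j := (code_index M y).-1)); last first.
  by case: code_index iq.
by apply: eq_card => i; rewrite !inE Gmap_window //; case: in_window.
Qed.

Lemma sum_Gmap t y c : t <= q -> (c == 1) || (c == 2) ->
  \sum_(1 <= i < q.+1) (Gmap M t i y == c : nat) = Gcount q t c.
Proof. by move=> tq; apply: sum_color2 (sum_Gmap1 y tq) => i; apply: Gmap_color. Qed.

Lemma card_adj_Gmap t i y c : t <= q -> (c == 1) || (c == 2) -> Gmap M t i y != c ->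
  #|[set y' | adj y y' & Gmap M t i y' == c]| = m * Gcount q t c.
Proof.
move=> tq c12; case: (posnP m) => [m0 _|m_gt0].
  have -> : m * Gcount q t c = 0 by rewrite m0.
  apply/eqP; rewrite cards_eq0; apply/eqP/setP => y'.
  by rewrite !inE; case: (boolP (adj y y')) => // /adj_dim_gt0; rewrite lt0n (introT eqP m0).
pose G j := if in_window q t i.-1 j.-1 then 1 else 2.
have GE y' : Gmap M t i y' = G (code_index M y') by rewrite Gmap_window.
rewrite GE => Gy; rewrite (eq_card (B := [set y' | adj y y' & G (code_index M y') == c]));
  last by move=> y'; rewrite !inE GE.
have code_range y' := proj1 (code_indexP (hM m_gt0) y').
rewrite (card_by_color (adj y) (fun j => G j == c) code_range).
rewrite (sum_nat_cond_const (a := m)) => [|j jq Gj]; last first.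
  rewrite (card_adj_code_index (hM m_gt0)) //.
  by case: eqP => // jE; rewrite jE (negPf Gy) in Gj.
have sumG1 : \sum_(1 <= j < q.+1) (G j == 1 : nat) = t.
  rewrite sum_nat_card -[RHS](card_window q_gt0 tq i.-1).
  by apply: eq_card => j; rewrite !inE /G; case: in_window.
by rewrite (sum_color2 _ sumG1 c12) // => j; rewrite /G; case: in_window.
Qed.

Lemma sum_Gmap_const t y c (P : pred nat) (F : nat -> nat) a :
  t <= q -> (c == 1) || (c == 2) ->
  (forall j, 1 <= j <= q -> P j = (Gmap M t j y == c)) ->
  (forall j, 1 <= j <= q -> P j -> F j = a) ->
  \sum_(1 <= j < q.+1 | P j) F j = a * Gcount q t c.
Proof.
move=> tq c12 PG Fa; rewrite (sum_nat_cond_const Fa) -(sum_Gmap y tq c12).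
by congr (_ * _); apply: eq_big_nat => j /PG->.
Qed.

Lemma Gmap_exists t y c : t <= q -> (c == 1) || (c == 2) -> 0 < Gcount q t c ->
  exists2 i, 1 <= i <= q & Gmap M t i y = c.
Proof.
move=> tq c12; rewrite -(sum_Gmap y tq c12) sum_nat_card card_gt0.
by case/set0Pn => i; rewrite inE => /eqP Gi; exists i.+1; rewrite ?ltn_ord.
Qed.

End GmapCount.

Lemma bc_coloring_intro N q (h : hv N q -> nat) b c :
  (forall z, (h z == 1) || (h z == 2)) -> (exists z, h z = 1) -> (exists z, h z = 2) ->
  (forall z, h z = 1 -> #|[set z' | adj z z' & h z' == 2]| = b) ->
  (forall z, h z = 2 -> #|[set z' | adj z z' & h z' == 1]| = c) -> bc_coloring h b c.
Proof.
move=> h12 [z1 hz1] [z2 hz2] hb hc; pose D := N * (q - 1).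
have deg z : #|[set z' | adj z z' & h z' == 1]| + #|[set z' | adj z z' & h z' == 2]| = D.
  rewrite /D -(card_adj z) -[RHS](cardsID [set z' | h z' == 1]).
  congr (_ + _); apply: eq_card => z'; first by rewrite !inE.
  by rewrite !inE andbC; case/orP: (h12 z') => /eqP->.
exists (fun i j => if i == 1 then (if j == 1 then D - b else b)
                  else (if j == 1 then c else D - c)); split=> //; split.
- by move=> z; case/orP: (h12 z) => /eqP->.
- by move=> [|[|[|]]] //= _; [exists z1 | exists z2].
move=> z [|[|[|]]] //= _; have := deg z; case/orP: (h12 z) => /eqP hz; rewrite hz /=.
- by rewrite (hb z hz) => <-; rewrite addnK.
- by rewrite (hc z hz).
- by rewrite (hb z hz).
- by rewrite (hc z hz) => <-; rewrite addKn.
Qed.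

Section InvasionQPlus1Coloring.
Variables (q m : nat) (M : nat -> {set hv m q}).
Hypotheses (q_gt0 : 0 < q) (hM : 0 < m -> mds_partition M).
Variables (n : nat) (f : hv n q -> nat) (S : nat -> nat -> nat) (alpha beta gamma : nat).
Hypotheses (f_perf : perfect_coloring f q.+1 S)
  (S_off : forall i j, 1 <= i <= q -> 1 <= j <= q -> i != j -> S i j = alpha)
  (S_last : forall i, 1 <= i <= q -> S i q.+1 = beta)
  (S_first : forall j, 1 <= j <= q -> S q.+1 j = gamma)
  (gamma_eq : m + alpha = gamma).
Variables (t l : nat).
Hypotheses (tq : t <= q) (l12 : (l == 1) || (l == 2)).

Let g i : hv m q -> nat := if i <= q then Gmap M t i else fun=> l.

Lemma card_adj_invasion1 w c : (c == 1) || (c == 2) -> invasion f g w != c ->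
  #|[set w' | adj w w' & invasion f g w' == c]| = gamma * Gcount q t c + beta * (l == c).
Proof.
move=> c12; rewrite -(join_part w); move: (lpart w) (rpart w) => x y.
rewrite (card_adj_invasion g x y c f_perf) invasion_join.
rewrite big_mkcond big_nat_recr //= -big_mkcond.
have gE j : 1 <= j <= q -> (g j y == c) = (Gmap M t j y == c).
  by case/andP=> _ jq; rewrite /g jq.
have [/(_ x)/andP[fx_gt0 fxq] _ _] := f_perf; rewrite /g ltnn.
case: (leqP (f x) q) => [fx_le Gy|fx_gt /negPf lc]; last first.
  have -> : f x = q.+1 by apply/eqP; rewrite eqn_leq fxq fx_gt.
  rewrite (sum_Gmap_const q_gt0 hM (a := gamma) tq c12 gE) => [|j jq _]; last first.
    exact: S_first.
  rewrite lc muln0 !addn0 -[RHS]addn0; congr (_ + _).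
  by apply/eqP; rewrite cards_eq0; apply/eqP/setP => y'; rewrite !inE andbF.
rewrite (sum_Gmap_const q_gt0 hM (a := alpha) tq c12 gE) => [|j jq Gj]; last first.
  apply: S_off; rewrite ?fx_gt0 //.
  by apply: contraNneq Gy => ->; rewrite -gE.
rewrite (card_adj_Gmap q_gt0 hM) // S_last ?fx_gt0 // -gamma_eq.
by rewrite mulnDl; case: (l == c); lia.
Qed.

Lemma bc_coloring_invasion1 : t * (l - 1) + (q - t) * (2 - l) != 0 ->
  bc_coloring (invasion f g) (gamma * (q - t) + beta * (l - 1)) (gamma * t + beta * (2 - l)).
Proof.
move=> nondeg; pose y0 : hv m q := [ffun=> Ordinal q_gt0].
have colored c : (c == 1) || (c == 2) -> (l == c) || (0 < Gcount q t c) ->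
    exists w, invasion f g w = c.
  move=> c12 /orP[/eqP lc|/(Gmap_exists q_gt0 hM y0 tq c12)[i /andP[i_gt0 iq] Gi]].
    by apply: (invasion_colors (j := q.+1) (y := y0) f_perf); rewrite ?leqnn // /g ltnn.
  by apply: (invasion_colors (j := i) (y := y0) f_perf); rewrite ?i_gt0 ?leqW // /g iq.
apply: bc_coloring_intro.
- by move=> w; rewrite /invasion /g; case: ifP => _; [apply: Gmap_color|].
- by apply: colored; case/orP: l12 nondeg => /eqP-> //=; rewrite /Gcount /=; lia.
- by apply: colored; case/orP: l12 nondeg => /eqP-> //=; rewrite /Gcount /=; lia.
- by move=> w hw; rewrite card_adj_invasion1 ?hw //; case/orP: l12 => /eqP->.
- by move=> w hw; rewrite card_adj_invasion1 ?hw //; case/orP: l12 => /eqP->.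
Qed.

End InvasionQPlus1Coloring.

Section Invasion2QColoring.
Variables (q m : nat) (M : nat -> {set hv m q}).
Hypotheses (q_gt0 : 0 < q) (hM : 0 < m -> mds_partition M).
Variables (n : nat) (f : hv n q -> nat) (S : nat -> nat -> nat).
Variables (alpha beta gamma delta : nat).
Hypotheses (f_perf : perfect_coloring f (2 * q) S)
  (S11 : forall i j, 1 <= i <= q -> 1 <= j <= q -> S i j = alpha)
  (S12 : forall i j, 1 <= i <= q -> q < j <= 2 * q -> S i j = beta)
  (S21 : forall i j, q < i <= 2 * q -> 1 <= j <= q -> S i j = gamma)
  (S22 : forall i j, q < i <= 2 * q -> q < j <= 2 * q -> S i j = delta)
  (gamma_eq : m + alpha = gamma) (beta_eq : m + delta = beta).
Variables (t1 t2 : nat).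
Hypotheses (t1q : t1 <= q) (t2q : t2 <= q).

Let g i : hv m q -> nat := if i <= q then Gmap M t1 i else Gmap M t2 (i - q).

Lemma g_first i : i <= q -> g i = Gmap M t1 i.
Proof. by rewrite /g => ->. Qed.

Lemma g_second i : 0 < i -> g (q + i) = Gmap M t2 i.
Proof. by move=> i_gt0; rewrite /g addKn leqNgt -[X in X < _]addn0 ltn_add2l i_gt0. Qed.

Lemma card_adj_invasion2 w c : (c == 1) || (c == 2) -> invasion f g w != c ->
  #|[set w' | adj w w' & invasion f g w' == c]| =
  gamma * Gcount q t1 c + beta * Gcount q t2 c.
Proof.
move=> c12; rewrite -(join_part w); move: (lpart w) (rpart w) => x y.
rewrite (card_adj_invasion g x y c f_perf) invasion_join mul2n -addnn sum_nat_cond_split.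
have gE1 j : 1 <= j <= q -> (g j y == c) = (Gmap M t1 j y == c).
  by case/andP=> _ /g_first->.
have gE2 j : 1 <= j <= q -> (g (q + j) y == c) = (Gmap M t2 j y == c).
  by case/andP=> /g_second->.
have [/(_ x)/andP[fx_gt0 fxq] _ _] := f_perf; rewrite mul2n -addnn in fxq.
rewrite /g; case: (leqP (f x) q) => [fx_le Gy|fx_gt Gy].
  rewrite (sum_Gmap_const q_gt0 hM (a := alpha) t1q c12 gE1) => [|j jq _]; last first.
    by apply: S11; rewrite ?fx_gt0.
  rewrite (sum_Gmap_const q_gt0 hM (a := beta) t2q c12 gE2) => [|j /andP[j_gt0 jq] _];
    last first.
    by apply: S12; rewrite ?fx_gt0 //; lia.
  by rewrite (card_adj_Gmap q_gt0 hM) // -gamma_eq mulnDl; lia.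
rewrite (sum_Gmap_const q_gt0 hM (a := gamma) t1q c12 gE1) => [|j jq _]; last first.
  by apply: S21; rewrite ?jq //; lia.
rewrite (sum_Gmap_const q_gt0 hM (a := delta) t2q c12 gE2) => [|j /andP[j_gt0 jq] _];
  last first.
  by apply: S22; lia.
by rewrite (card_adj_Gmap q_gt0 hM) // -beta_eq mulnDl; lia.
Qed.

Lemma bc_coloring_invasion2 : t1 + t2 != 0 -> t1 + t2 != 2 * q ->
  bc_coloring (invasion f g)
    (q * (gamma + beta) - gamma * t1 - beta * t2) (gamma * t1 + beta * t2).
Proof.
move=> nz1 nz2; pose y0 : hv m q := [ffun=> Ordinal q_gt0].
have colored c : (c == 1) || (c == 2) -> 0 < Gcount q t1 c + Gcount q t2 c ->
    exists w, invasion f g w = c.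
  move=> c12; rewrite addn_gt0 => /orP[].
    case/(Gmap_exists q_gt0 hM y0 t1q c12) => i /andP[i_gt0 iq] Gi.
    by apply: (invasion_colors (j := i) (y := y0) f_perf); rewrite ?g_first //; lia.
  case/(Gmap_exists q_gt0 hM y0 t2q c12) => i /andP[i_gt0 iq] Gi.
  by apply: (invasion_colors (j := q + i) (y := y0) f_perf); rewrite ?g_second //; lia.
apply: bc_coloring_intro.
- by move=> w; rewrite /invasion /g; case: ifP => _; apply: Gmap_color.
- by apply: colored; rewrite /Gcount /=; lia.
- by apply: colored; rewrite /Gcount /=; lia.
- move=> w hw; rewrite card_adj_invasion2 ?hw // /Gcount /=.
  have : gamma * t1 <= gamma * q /\ beta * t2 <= beta * q by rewrite !leq_mul2l t1q t2q !orbT.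
  by rewrite !mulnBr mulnDr ![q * _]mulnC; lia.
- by move=> w hw; rewrite card_adj_invasion2 ?hw.
Qed.

End Invasion2QColoring.

Theorem proposition9 (q m : nat) (M : nat -> {set hv m q}) :
  2 <= q ->
  (1 <= m -> mds_partition M) ->
  (forall (n : nat) (f : hv n q -> nat) (S : nat -> nat -> nat)
          (alpha alpha' beta gamma delta : nat),
      perfect_coloring f q.+1 S ->
      (forall i j, 1 <= i <= q -> 1 <= j <= q -> i != j -> S i j = alpha) ->
      (forall i, 1 <= i <= q -> S i i = alpha') ->
      (forall i, 1 <= i <= q -> S i q.+1 = beta) ->
      (forall j, 1 <= j <= q -> S q.+1 j = gamma) ->
      S q.+1 q.+1 = delta ->
      m + alpha = gamma ->
      forall t l, t <= q -> (l == 1) || (l == 2) ->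
        t * (l - 1) + (q - t) * (2 - l) != 0 ->
        bc_coloring
          (invasion f (fun i => if i <= q then Gmap M t i else fun _ => l))
          (gamma * (q - t) + beta * (l - 1)) (gamma * t + beta * (2 - l)))
  /\
  (forall (n : nat) (f : hv n q -> nat) (S : nat -> nat -> nat)
          (alpha beta gamma delta : nat),
      perfect_coloring f (2 * q) S ->
      (forall i j, 1 <= i <= q -> 1 <= j <= q -> S i j = alpha) ->
      (forall i j, 1 <= i <= q -> q < j <= 2 * q -> S i j = beta) ->
      (forall i j, q < i <= 2 * q -> 1 <= j <= q -> S i j = gamma) ->
      (forall i j, q < i <= 2 * q -> q < j <= 2 * q -> S i j = delta) ->
      m + alpha = gamma -> m + delta = beta ->
      forall t1 t2, t1 <= q -> t2 <= q ->
        t1 + t2 != 0 -> t1 + t2 != 2 * q ->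
        bc_coloring
          (invasion f (fun i => if i <= q then Gmap M t1 i
                                else Gmap M t2 (i - q)))
          (q * (gamma + beta) - gamma * t1 - beta * t2)
          (gamma * t1 + beta * t2)).
Proof.
move=> q_ge2 hM; have q_gt0 : 0 < q by apply: ltnW.
split=> [n f S alpha alpha' beta gamma delta f_perf S_off _ S_last S_first _ gamma_eq t l
        |n f S alpha beta gamma delta f_perf S11 S12 S21 S22 gamma_eq beta_eq t1 t2].
- (* [alpha'] and [delta] never enter: a vertex's own cell never has the opposite color. *)
  exact: (bc_coloring_invasion1 q_gt0 hM f_perf S_off S_last S_first gamma_eq).
- exact: (bc_coloring_invasion2 q_gt0 hM f_perf S11 S12 S21 S22 gamma_eq beta_eq).
Qed.
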